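(* For $(x,y)\in\mathbb{Z}^2$ let $\epsilon=\epsilon(x,y)$ be $1/2$ if $x$ and $y$ are both odd and $0$ otherwise, so that $(x,y,\epsilon+m)\in H(\mathbb{Z})$ for all $m\in\mathbb{Z}$. Then the word length $|(x,y,\epsilon+m)|_{\sf std}$ is a nondecreasing function of $m\in\{0,1,2,\dots\}$.
   Context: $H(\mathbb{Z})$ is written in exponential coordinates: the group law is $(x,y,z)(x',y',z')=(x+x',y+y',z+z'+\tfrac12(xy'-yx'))$ and $H(\mathbb{Z})=\{(x,y,z):x,y\in\mathbb{Z},z\in\mathbb{Z}+\epsilon(x,y)\}$. $|\cdot|_{\sf std}$ is word length with respect to ${\sf std}=\{\pm{\sf e}_1,\pm{\sf e}_2\}$, ${\sf e}_1=(1,0,0)$, ${\sf e}_2=(0,1,0)$. *)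

From Stdlib Require Import ClassicalEpsilon.
From mathcomp Require Import all_boot all_order all_algebra.
Set Implicit Arguments. Unset Strict Implicit. Unset Printing Implicit Defensive.
Import Order.TTheory GRing.Theory Num.Theory.
Local Open Scope ring_scope.

(* Real Heisenberg group in exponential coordinates, restricted to the
   ambient set Z x Z x Q (which contains H(Z)). *)
Definition heis := (int * int * rat)%type.

Definition hmul (g h : heis) : heis :=
  let: (x, y, z) := g in
  let: (x', y', z') := h in
  (x + x', y + y', z + z' + (x%:~R * y'%:~R - y%:~R * x'%:~R) / 2%:R).

Definition hone : heis := (0, 0, 0).

Inductive std_gen := E1 | E1inv | E2 | E2inv.

Definition gen_val (s : std_gen) : heis :=
  match s with
  | E1 => (1, 0, 0)
  | E1inv => (-1, 0, 0)
  | E2 => (0, 1, 0)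
  | E2inv => (0, -1, 0)
  end.

Definition word_eval (w : seq std_gen) : heis :=
  foldr (fun s acc => hmul (gen_val s) acc) hone w.

Definition is_word_length (g : heis) (n : nat) : Prop :=
  (exists w, size w = n /\ word_eval w = g) /\
  (forall w, word_eval w = g -> (n <= size w)%N).

Definition word_length (g : heis) : nat :=
  epsilon (inhabits 0%N) (fun n => is_word_length g n).

Definition eps (x y : int) : rat :=
  if odd `|x|%N && odd `|y|%N then 2%:R^-1 else 0.

(* Adjacent transpositions of letters keep the length of a word and its projection
   (x, y), and move the central coordinate by the signed area of the two letters,
   which is -1, 0 or 1.  Sorting a word so that all its e1-letters precede its
   e2-letters, or the other way round, produces the central value (x y)/2 or
   -(x y)/2.  Starting from a shortest word for (x, y, eps + m') and sorting in the
   right order therefore sweeps through every central value eps + k, k integer,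
   between eps + m' and -|x y|/2 <= eps + m, all with words of the same length;
   one of them represents (x, y, eps + m). *)

From Stdlib Require Import Classical ClassicalEpsilon.
From mathcomp Require Import all_boot all_order all_algebra.
From mathcomp Require Import ring lra zify.
Import Order.TTheory GRing.Theory Num.Theory.
Local Open Scope ring_scope.

Definition zshift (g : heis) (c : rat) : heis := (g.1, g.2 + c).

Lemma zshift0 g : zshift g 0 = g.
Proof. by case: g => p z; rewrite /zshift addr0. Qed.

Lemma zshiftD g a b : zshift (zshift g a) b = zshift g (a + b).
Proof. by rewrite /zshift addrA. Qed.

Lemma hmul_zshiftl g h c : hmul (zshift g c) h = zshift (hmul g h) c.
Proof.
move: g h => [[x y] z] [[x' y'] z']; rewrite /zshift /hmul /=.
by congr (_, _); ring.
Qed.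

Lemma hmul_zshiftr g h c : hmul g (zshift h c) = zshift (hmul g h) c.
Proof.
move: g h => [[x y] z] [[x' y'] z']; rewrite /zshift /hmul /=.
by congr (_, _); ring.
Qed.

Lemma hmulA g h k : hmul (hmul g h) k = hmul g (hmul h k).
Proof.
move: g h k => [[x y] z] [[x' y'] z'] [[x'' y''] z''].
by rewrite /hmul !rmorphD /=; congr (_, _, _); rewrite ?addrA //; field.
Qed.

Lemma hmul1g g : hmul hone g = g.
Proof.
move: g => [[x y] z]; rewrite /hmul /hone /=.
by congr (_, _, _); rewrite ?add0r //; ring.
Qed.

Definition area (g h : heis) : int := g.1.2 * h.1.1 - g.1.1 * h.1.2.

Lemma hmulC_zshift g h : hmul h g = zshift (hmul g h) (area g h)%:~R.
Proof.
move: g h => [[x y] z] [[x' y'] z']; rewrite /zshift /hmul /area /=.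
by rewrite rmorphB !rmorphM /=; congr (_, _, _); rewrite 1?addrC //; field.
Qed.

Lemma area_gen s a : -1 <= area (gen_val s) (gen_val a) <= 1.
Proof. by case: s; case: a. Qed.

Lemma word_eval_cons s w : word_eval (s :: w) = hmul (gen_val s) (word_eval w).
Proof. by []. Qed.

Lemma word_eval_cat u v : word_eval (u ++ v) = hmul (word_eval u) (word_eval v).
Proof.
elim: u => [|s u IH]; first by rewrite hmul1g.
by rewrite cat_cons !word_eval_cons IH hmulA.
Qed.

Definition between (a b k : int) : Prop := a <= k <= b \/ b <= k <= a.

Definition interpolates (w1 w2 : seq std_gen) : Prop :=
  size w1 = size w2 /\
  exists d : int, word_eval w2 = zshift (word_eval w1) d%:~R /\
    forall k, between 0 d k ->
      exists2 w, size w = size w1 & word_eval w = zshift (word_eval w1) k%:~R.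

Lemma interpolates_refl w : interpolates w w.
Proof.
split=> //; exists 0; rewrite zshift0; split=> // k.
rewrite /between => Hk; have -> : k = 0 by lia.
by exists w; rewrite ?zshift0.
Qed.

Lemma interpolates_trans w1 w2 w3 :
  interpolates w1 w2 -> interpolates w2 w3 -> interpolates w1 w3.
Proof.
move=> [s12 [d1 [e12 H1]]] [s23 [d2 [e23 H2]]].
split; first by rewrite s12.
exists (d1 + d2); split; first by rewrite e23 e12 zshiftD rmorphD.
move=> k Hk.
have [/H1 // | Hk2] : between 0 d1 k \/ between 0 d2 (k - d1).
  by move: Hk; rewrite /between; lia.
have [w sw ew] := H2 _ Hk2; exists w; first by rewrite sw s12.
by rewrite ew e12 zshiftD -rmorphD /= addrC subrK.
Qed.

Arguments interpolates_trans {w1 w2 w3}.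

Lemma interpolates_cons s w1 w2 :
  interpolates w1 w2 -> interpolates (s :: w1) (s :: w2).
Proof.
move=> [s12 [d [e12 H]]]; split; first by rewrite /= s12.
exists d; split; first by rewrite !word_eval_cons e12 hmul_zshiftr.
move=> k /H [w sw ew]; exists (s :: w); first by rewrite /= sw.
by rewrite !word_eval_cons ew hmul_zshiftr.
Qed.

Lemma interpolates_swap s a r : interpolates (s :: a :: r) (a :: s :: r).
Proof.
split=> //; set d := area (gen_val s) (gen_val a).
have eval_swap : word_eval (a :: s :: r) = zshift (word_eval (s :: a :: r)) d%:~R.
  rewrite !word_eval_cons -!hmulA [hmul (gen_val a) _]hmulC_zshift.
  by rewrite hmul_zshiftl.
exists d; split=> // k Hk.
have [->|->] : k = 0 \/ k = d by move: Hk (area_gen s a); rewrite /between -/d; lia.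
  by exists (s :: a :: r); rewrite ?zshift0.
by exists (a :: s :: r).
Qed.

Lemma interpolates_move s u v : interpolates (s :: u ++ v) (u ++ s :: v).
Proof.
elim: u => [|a u IH]; first exact: interpolates_refl.
apply: interpolates_trans (interpolates_swap _ _ _) _.
exact: interpolates_cons.
Qed.

Lemma interpolates_partition (P : pred std_gen) w :
  interpolates w (filter P w ++ filter (predC P) w).
Proof.
elim: w => [|s w IH]; first exact: interpolates_refl.
apply: interpolates_trans (interpolates_cons s _ _ IH) _.
rewrite /=; case: (P s) => /=; [exact: interpolates_refl | exact: interpolates_move].
Qed.

Definition is_x_gen (s : std_gen) : bool :=
  match s with E1 | E1inv => true | _ => false end.
Definition is_y_gen (s : std_gen) : bool :=
  match s with E2 | E2inv => true | _ => false end.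

Lemma predC_is_x_gen : predC is_x_gen =1 is_y_gen. Proof. by case. Qed.
Lemma predC_is_y_gen : predC is_y_gen =1 is_x_gen. Proof. by case. Qed.

Lemma hmul_proj g h : (hmul g h).1 = (g.1.1 + h.1.1, g.1.2 + h.1.2).
Proof. by move: g h => [[x y] z] [[x' y'] z']. Qed.

Lemma word_eval_x u : all is_x_gen u -> word_eval u = ((word_eval u).1.1, 0, 0).
Proof.
elim: u => [|s u IH] // /andP[xs /IH eu]; rewrite word_eval_cons eu.
by case: s xs => // _; rewrite /hmul /=; congr (_, _, _); ring.
Qed.

Lemma word_eval_y u : all is_y_gen u -> word_eval u = (0, (word_eval u).1.2, 0).
Proof.
elim: u => [|s u IH] // /andP[ys /IH eu]; rewrite word_eval_cons eu.
by case: s ys => // _; rewrite /hmul /=; congr (_, _, _); ring.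
Qed.

Lemma word_eval_lowest u v a b :
  all is_x_gen u -> all is_y_gen v ->
  (word_eval u).1.1 = a -> (word_eval v).1.2 = b ->
  word_eval (if 0 <= a * b then v ++ u else u ++ v) = (a, b, - `|a * b|%:~R / 2%:R).
Proof.
move=> /word_eval_x eu /word_eval_y ev ea eb; rewrite ea in eu; rewrite eb in ev.
have euv : word_eval (u ++ v) = (a, b, (a * b)%:~R / 2%:R).
  by rewrite word_eval_cat eu ev /hmul /= rmorphM; congr (_, _, _); ring.
case: ifP => [ab_ge0 | /negbT]; last first.
  by rewrite -ltNge => ab_lt0; rewrite euv ltr0_norm // rmorphN opprK.
rewrite word_eval_cat hmulC_zshift -word_eval_cat euv /zshift /area eu ev /=.
by rewrite ger0_norm // rmorphB !rmorphM mul0r /=; congr (_, _, _); field.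
Qed.

Lemma interpolates_lowest w : exists2 w', interpolates w w' &
  word_eval w' = ((word_eval w).1, - `|(word_eval w).1.1 * (word_eval w).1.2|%:~R / 2%:R).
Proof.
set u := filter is_x_gen w; set v := filter is_y_gen w.
have ew := @word_eval_lowest u v _ _ (filter_all _ w) (filter_all _ w) erefl erefl.
set a := (word_eval u).1.1 in ew; set b := (word_eval v).1.2 in ew.
suff [w' ww' ew'] : exists2 w', interpolates w w' &
    word_eval w' = (a, b, - `|a * b|%:~R / 2%:R).
  have [_ [d [e _]]] := ww'.
  have := congr1 fst e; rewrite ew' /= => <-.
  by exists w'.
exists (if 0 <= a * b then v ++ u else u ++ v) => //.
case: ifP => _.
  by rewrite /v /u -(eq_filter predC_is_y_gen); apply: interpolates_partition.
by rewrite /u /v -(eq_filter predC_is_x_gen); apply: interpolates_partition.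
Qed.

Lemma word_lower_center w (c : nat) :
  - `|(word_eval w).1.1 * (word_eval w).1.2|%:~R / 2%:R <= (word_eval w).2 - c%:R ->
  exists2 w', size w' = size w & word_eval w' = zshift (word_eval w) (- c%:R).
Proof.
move=> low_le; have [w' [_ [d [e fill]]] ew'] := interpolates_lowest w.
have [|w'' sw'' ew''] := fill (- c%:Z); last by exists w''; rewrite // ew'' rmorphN.
have := congr1 snd e; rewrite ew' /= => ed.
suff : d%:~R <= (- c%:Z)%:~R :> rat by rewrite ler_int /between; lia.
by rewrite rmorphN -(lerD2l (word_eval w).2) -ed.
Qed.

Lemma word_eval_nseq_proj n s :
  (word_eval (nseq n s)).1 = (n%:Z * (gen_val s).1.1, n%:Z * (gen_val s).1.2).
Proof.
elim: n => [|n IH]; first by rewrite !mul0r.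
by rewrite [nseq _ _]/= word_eval_cons hmul_proj IH intS !mulrDl !mul1r.
Qed.

Lemma exists_word_proj x y : exists w, (word_eval w).1 = (x, y).
Proof.
pose sgn_gen (n : int) (pos neg : std_gen) := if 0 <= n then pos else neg.
exists (nseq `|x| (sgn_gen x E1 E1inv) ++ nseq `|y| (sgn_gen y E2 E2inv)).
rewrite word_eval_cat hmul_proj !word_eval_nseq_proj /sgn_gen !abszE.
by case: (lerP 0 x) => [/ger0_norm-> | /ltr0_norm->];
  case: (lerP 0 y) => [/ger0_norm-> | /ltr0_norm->];
  rewrite /= ?mulr1 ?mulrN1 ?mulr0 ?addr0 ?add0r ?opprK.
Qed.

Definition commutator_word : seq std_gen := [:: E1; E2; E1inv; E2inv].

Lemma word_eval_commutator w :
  word_eval (commutator_word ++ w) = zshift (word_eval w) 1.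
Proof.
rewrite word_eval_cat; case: (word_eval w) => [[x y] z].
by rewrite /hmul /zshift /=; congr (_, _, _); rewrite ?add0r //; field.
Qed.

Lemma word_eval_iter_commutator j w :
  word_eval (iter j (cat commutator_word) w) = zshift (word_eval w) j%:R.
Proof.
elim: j => [|j IH]; first by rewrite zshift0.
by rewrite iterS word_eval_commutator IH zshiftD -natr1.
Qed.

Lemma eps_odd x y : eps x y = (odd `|x * y|)%:R / 2%:R.
Proof. by rewrite /eps abszM oddM; case: andb; rewrite ?mul0r ?mul1r. Qed.

Lemma eps_ge0 x y : 0 <= eps x y.
Proof. by rewrite /eps; case: ifP. Qed.

Lemma exists_word x y (m : nat) : exists w, word_eval w = (x, y, eps x y + m%:R).
Proof.
have [w0 ew0] := exists_word_proj x y.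
have [w1 _] := interpolates_lowest w0; rewrite ew0 /= => ew1.
set N := absz (x * y).
exists (iter (m + (odd N + N./2)) (cat commutator_word) w1).
rewrite word_eval_iter_commutator ew1 /zshift eps_odd -/N /=; congr (_, _).
have -> : `|x * y|%:~R = N%:R :> rat by rewrite -abszE.
by rewrite -{1}(odd_double_half N) !natrD -muln2 natrM; field.
Qed.

Lemma word_lengthP g : (exists w, word_eval w = g) -> is_word_length g (word_length g).
Proof.
move=> [w ew]; apply: epsilon_spec.
suff minimal n : (exists2 w, size w = n & word_eval w = g) ->
    exists n0, is_word_length g n0 by apply: (minimal (size w)); exists w.
elim/ltn_ind: n => n IH [w0 sw0 ew0].
have [[w' [ew' lt_w'n]] | no_shorter] :=
  classic (exists w', word_eval w' = g /\ (size w' < n)%N).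
  by apply: (IH (size w') lt_w'n); exists w'.
exists n; split; first by exists w0.
move=> w' ew'; rewrite leqNgt; apply/negP => lt_w'n; apply: no_shorter.
by exists w'.
Qed.

Theorem mainTheorem18 (x y : int) (m m' : nat) :
  (m <= m')%N ->
  (word_length (x, y, (eps x y + m%:R)%R) <= word_length (x, y, (eps x y + m'%:R)%R))%N.
Proof.
move=> le_mm'.
have [[w [<- ew]] _] := word_lengthP _ (exists_word x y m').
have [_ minimal] := word_lengthP _ (exists_word x y m).
have [|w' <- ew'] := word_lower_center w (m' - m).
  rewrite ew /= natrB //.
  have : 0 <= `|x * y|%:~R :> rat by rewrite ler0z normr_ge0.
  have : 0 <= m%:R :> rat by [].
  have := eps_ge0 x y; lra.
apply: minimal; rewrite ew' ew /zshift natrB //=.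
by congr (_, _); ring.
Qed.
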